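(* Let $L$ be an ideal lattice. A support datum $(X,\sigma)$ on $L$ is classifying if and only if the canonical morphism $f\colon(X,\sigma)\to(\operatorname{Spec}^*L,\operatorname{supp})$ (the unique continuous map with $\sigma(a)=f^{-1}(\operatorname{supp}(a))$ for compact $a$) is a homeomorphism.
   Context: An ideal lattice is a poset $(L,\leq)$ with an associative multiplication such that: (L1) $L$ is a complete lattice; (L2) every element is a supremum of compact elements ($a$ is compact if $a\leq\sup A$ implies $a\leq\sup A'$ for some finite $A'\subseteq A$); (L3) multiplication distributes over binary joins on both sides; (L4) $1=\sup L$ is compact and is a two-sided identity; (L5) products of compact elements are compact. Prime: $p\neq1$ with $ab\leq p\Rightarrow a\leq p$ or $b\leq p$; semi-prime: $bb\leq a\Rightarrow b\leq a$. $\operatorname{Spec}^*L$ is the set of primes with the topology whose open sets are unions of sets whose complements are quasi-compact open in the Zariski topology (Zariski closed sets being $V(a)=\{p\mid a\leq p\}$); $\operatorname{supp}(a)=\{p\mid a\not\leq p\}$. A support datum on $L$ is a pair $(X,\sigma)$, $X$ a space, $\sigma$ assigning to each compact $a$ a closed subset with $\sigma(a\vee b)=\sigma(a)\cup\sigma(b)$, $\sigma(1)=X$, $\sigma(ab)=\sigma(a)\cap\sigma(b)$. It is classifying if $X$ is spectral ($T_0$, quasi-compact, quasi-compact opens closed under finite intersections and forming a basis, generic points for non-empty irreducible closed sets) and $a\mapsto\bigcup_{b\leq a\text{ compact}}\sigma(b)$, $Y\mapsto\bigvee_{b\text{ compact},\sigma(b)\subseteq Y}b$ give mutually inverse bijections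 between semi-primes of $L$ and subsets $Y=\bigcup_iY_i\subseteq X$ with each $X\setminus Y_i$ quasi-compact open. *)

From Stdlib Require Import List.
Import ListNotations.
Set Implicit Arguments.

Section Generic.
Variables (T : Type) (le : T -> T -> Prop) (sup : (T -> Prop) -> T).

Definition gjoin (a b : T) : T := sup (fun x => x = a \/ x = b).
Definition gtop : T := sup (fun _ => True).

Definition gcompact (a : T) : Prop :=
  forall A : T -> Prop, le a (sup A) ->
    exists l : list T, (forall x, In x l -> A x) /\ le a (sup (fun x => In x l)).

Definition ideal_lattice_axioms (mul : T -> T -> T) : Prop :=
  (forall a, le a a) /\
  (forall a b c, le a b -> le b c -> le a c) /\
  (forall a b, le a b -> le b a -> a = b) /\
  (forall (A : T -> Prop) a, A a -> le a (sup A)) /\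
  (forall (A : T -> Prop) b, (forall a, A a -> le a b) -> le (sup A) b) /\
  (forall a b c, mul a (mul b c) = mul (mul a b) c) /\
  (forall a, exists A : T -> Prop, (forall c, A c -> gcompact c) /\ a = sup A) /\
  (forall a b c, mul a (gjoin b c) = gjoin (mul a b) (mul a c)) /\
  (forall a b c, mul (gjoin a b) c = gjoin (mul a c) (mul b c)) /\
  gcompact gtop /\
  (forall a, mul gtop a = a) /\ (forall a, mul a gtop = a) /\
  (forall a b, gcompact a -> gcompact b -> gcompact (mul a b)).
End Generic.

Record IdealLattice := {
  IL :> Type;
  ile : IL -> IL -> Prop;
  imul : IL -> IL -> IL;
  isup : (IL -> Prop) -> IL;
  il_ax : ideal_lattice_axioms ile isup imul
}.
Arguments ile {_} _ _.
Arguments imul {_} _ _.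
Arguments isup {_} _.

Section LatticeNotions.
Variable L : IdealLattice.

Definition join (a b : L) : L := gjoin (@isup L) a b.
Definition top : L := gtop (@isup L).
Definition compact (a : L) : Prop := gcompact (@ile L) (@isup L) a.

Definition prime (p : L) : Prop :=
  p <> top /\ forall a b : L, ile (imul a b) p -> ile a p \/ ile b p.

Definition semiprime (a : L) : Prop :=
  forall b : L, ile (imul b b) a -> ile b a.

Definition Spec : Type := { p : L | prime p }.

Definition supp (a : L) : Spec -> Prop := fun p => ~ ile a (proj1_sig p).
Definition Vz (a : L) : Spec -> Prop := fun p => ile a (proj1_sig p).
End LatticeNotions.
Arguments join {L} _ _.
Arguments compact {L} _.
Arguments prime {L} _.
Arguments semiprime {L} _.
Arguments supp {L} _ _.
Arguments Vz {L} _ _.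

Section Topology.
Variables (X : Type) (op : (X -> Prop) -> Prop).

Definition is_topology : Prop :=
  op (fun _ => True) /\
  (forall U V, op U -> op V -> op (fun x => U x /\ V x)) /\
  (forall F : (X -> Prop) -> Prop, (forall U, F U -> op U) ->
      op (fun x => exists U, F U /\ U x)).

Definition compl (S : X -> Prop) : X -> Prop := fun x => ~ S x.
Definition closed (C : X -> Prop) : Prop := op (compl C).
Definition subset (S S' : X -> Prop) : Prop := forall x, S x -> S' x.

Definition quasi_compact (S : X -> Prop) : Prop :=
  forall F : (X -> Prop) -> Prop, (forall U, F U -> op U) ->
    (forall x, S x -> exists U, F U /\ U x) ->
    exists l : list (X -> Prop), (forall U, In U l -> F U) /\
      (forall x, S x -> exists U, In U l /\ U x).

Definition closure (S : X -> Prop) : X -> Prop :=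
  fun y => forall C, closed C -> subset S C -> C y.

Definition irreducible_closed (Z : X -> Prop) : Prop :=
  closed Z /\ (exists z, Z z) /\
  (forall C1 C2, closed C1 -> closed C2 ->
     subset Z (fun x => C1 x \/ C2 x) -> subset Z C1 \/ subset Z C2).

Definition spectral : Prop :=
  (forall x y, (forall U, op U -> (U x <-> U y)) -> x = y) /\
  quasi_compact (fun _ => True) /\
  (forall U V, op U -> quasi_compact U -> op V -> quasi_compact V ->
     quasi_compact (fun x => U x /\ V x)) /\
  (forall U, op U -> forall x, U x ->
     exists V, op V /\ quasi_compact V /\ V x /\ subset V U) /\
  (forall Z, irreducible_closed Z ->
     exists x, forall y, Z y <-> closure (fun z => z = x) y).

Definition dual_open (Y : X -> Prop) : Prop :=
  exists F : (X -> Prop) -> Prop,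
    (forall W, F W -> op (compl W) /\ quasi_compact (compl W)) /\
    (forall x, Y x <-> exists W, F W /\ W x).
End Topology.

Definition continuous (X Y : Type) (opX : (X -> Prop) -> Prop)
  (opY : (Y -> Prop) -> Prop) (f : X -> Y) : Prop :=
  forall U, opY U -> opX (fun x => U (f x)).

Definition homeomorphism (X Y : Type) (opX : (X -> Prop) -> Prop)
  (opY : (Y -> Prop) -> Prop) (f : X -> Y) : Prop :=
  exists g : Y -> X, (forall x, g (f x) = x) /\ (forall y, f (g y) = y) /\
    continuous opX opY f /\ continuous opY opX g.

Section SpecStar.
Variable L : IdealLattice.

Definition zariski_open (U : Spec L -> Prop) : Prop :=
  exists a : L, forall p, U p <-> supp a p.

Definition star_open (U : Spec L -> Prop) : Prop :=
  dual_open zariski_open U.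
End SpecStar.

Section Support.
Variables (L : IdealLattice) (X : Type) (op : (X -> Prop) -> Prop)
          (sigma : L -> X -> Prop).

Definition support_datum : Prop :=
  (forall a : L, compact a -> closed op (sigma a)) /\
  (forall a b : L, compact a -> compact b ->
     forall x, sigma (join a b) x <-> (sigma a x \/ sigma b x)) /\
  (forall x, sigma (top L) x) /\
  (forall a b : L, compact a -> compact b ->
     forall x, sigma (imul a b) x <-> (sigma a x /\ sigma b x)).

Definition phi_map (a : L) : X -> Prop :=
  fun x => exists b : L, compact b /\ ile b a /\ sigma b x.

Definition psi_map (Y : X -> Prop) : L :=
  isup (fun b : L => compact b /\ subset (sigma b) Y).

Definition classifying : Prop :=
  spectral op /\
  (forall a : L, semiprime a -> dual_open op (phi_map a) /\ psi_map (phi_map a) = a) /\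
  (forall Y, dual_open op Y ->
     semiprime (psi_map Y) /\ (forall x, phi_map (psi_map Y) x <-> Y x)).
End Support.

(* Spec^* L is spectral: prime avoidance of multiplicative systems of compacts (Zorn) provides
   enough primes, compact opens are the finite unions of the sets V(c), c compact, and the
   generic point of an irreducible closed set is a prime above the join of its points.
   Hence a homeomorphism f transports spectrality to X, and since sigma(c) = f^-1 supp(c) the
   classification of semiprimes (each one the meet of the primes above it) by the Thomason
   subsets of Spec^* becomes the one for (X, sigma).
   Conversely, if (X, sigma) is classifying, every quasi-compact open V equals
   f^-1 V(psi (X \ V)); so opens are upward closed along f and f is injective by T0.  A prime P
   is the image of the generic point of the irreducible closed set f^-1 {p | p <= P}, and f^-1
   is continuous by a patch-compactness argument using that each f^-1 V(c) is quasi-compact. *)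

From mathcomp Require classical_sets boolp.
From Stdlib Require Import Classical FunctionalExtensionality PropExtensionality ProofIrrelevance List Lia ClassicalEpsilon.
Import ListNotations.
Set Bullet Behavior "Strict Subproofs".

Lemma pred_ext {T : Type} (A B : T -> Prop) : (forall x, A x <-> B x) -> A = B.
Proof.
  intro H. apply functional_extensionality. intro x. apply propositional_extensionality. apply H.
Qed.

Lemma zorn_maximal {T : Type} (P : T -> Prop) (R : T -> T -> Prop) :
  (forall t, R t t) -> (forall r s t, R r s -> R s t -> R r t) ->
  (forall s t, P s -> P t -> R s t -> R t s -> s = t) ->
  (forall A : T -> Prop, (forall a, A a -> P a) ->
     (forall s t, A s -> A t -> R s t \/ R t s) -> exists u, P u /\ forall s, A s -> R s u) ->
  exists m, P m /\ forall s, P s -> R m s -> s = m.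
Proof.
  intros Hrefl Htrans Hanti Hchain.
  pose (R' := fun s t : {t | P t} => boolp.asbool (R (proj1_sig s) (proj1_sig t))).
  assert (E : forall s t, is_true (R' s t) <-> R (proj1_sig s) (proj1_sig t)).
  { intros s t. unfold R'. destruct (boolp.asboolP (R (proj1_sig s) (proj1_sig t)));
      split; intro; auto; discriminate. }
  destruct (@classical_sets.Zorn _ R') as [[m Pm] Hm].
  - intro t. apply E. apply Hrefl.
  - intros r s t H1 H2. apply E. apply E in H1. apply E in H2. eauto.
  - intros [s Ps] [t Pt] H1 H2. apply E in H1. apply E in H2. simpl in *.
    destruct (Hanti s t Ps Pt H1 H2). f_equal. apply proof_irrelevance.
  - intros A HA.
    destruct (Hchain (fun t => exists Pt : P t, A (exist _ t Pt))) as [u [Pu Hu]].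
    + intros a [Pa _]. exact Pa.
    + intros s t [Ps As] [Pt At].
      destruct (HA _ _ As At) as [H|H]; apply E in H; [left|right]; exact H.
    + exists (exist _ u Pu). intros [s Ps] As. apply E. apply Hu. exists Ps. exact As.
  - exists m. split; [exact Pm|]. intros s Ps Rs.
    assert (H := Hm (exist _ s Ps) (proj2 (E (exist _ m Pm) (exist _ s Ps)) Rs)).
    inversion H. reflexivity.
Qed.

Lemma list_choice {A B : Type} (R : A -> B -> Prop) (l : list A) :
  (forall a, In a l -> exists b, R a b) ->
  exists l', (forall b, In b l' -> exists a, In a l /\ R a b) /\
             (forall a, In a l -> exists b, In b l' /\ R a b).
Proof.
  induction l as [|a l IH]; intro H.
  - exists []. split; intros ? [].
  - destruct (H a (or_introl eq_refl)) as [b Hb].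
    destruct IH as [l' [H1 H2]]. { intros a' Ha'. apply H. right. exact Ha'. }
    exists (b :: l'). split.
    + intros b' [<-|Hb'].
      * exists a. split; [left; reflexivity|exact Hb].
      * destruct (H1 b' Hb') as [a' [Ha' R']]. exists a'. split; [right; exact Ha'|exact R'].
    + intros a' [<-|Ha'].
      * exists b. split; [left; reflexivity|exact Hb].
      * destruct (H2 a' Ha') as [b' [Hb' R']]. exists b'. split; [right; exact Hb'|exact R'].
Qed.

Lemma chain_list_ub {T : Type} (R : T -> T -> Prop) (a : T) (A : T -> Prop) (l : list T) :
  (forall t, R t t) -> (forall r s t, R r s -> R s t -> R r t) ->
  (forall y, A y -> R a y) -> (forall s t, A s -> A t -> R s t \/ R t s) ->
  (forall z, In z l -> z = a \/ A z) ->
  exists y, (y = a \/ A y) /\ forall z, In z l -> R z y.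
Proof.
  intros Hrefl Htrans Aa Htot. induction l as [|z l IH]; intro Hl.
  - exists a. split; auto. intros ? [].
  - destruct IH as [y [Hy Hz]]. { intros; apply Hl; right; auto. }
    assert (Hzy : (z = a \/ A z) /\ R y z \/ R z y).
    { destruct (Hl z (or_introl eq_refl)) as [->|Az]; [right|destruct Hy as [->|Ay]].
      - destruct Hy as [->|Ay]; auto.
      - left. auto.
      - destruct (Htot z y Az Ay); auto. }
    destruct Hzy as [[Hz' Hyz]|Hzy].
    + exists z. split; auto. intros z' [<-|H']; eauto.
    + exists y. split; auto. intros z' [<-|H']; auto.
Qed.

Section QuasiCompact.
Variables (X : Type) (op : (X -> Prop) -> Prop).

Lemma quasi_compact_ext (S S' : X -> Prop) :
  (forall x, S x <-> S' x) -> quasi_compact op S -> quasi_compact op S'.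
Proof. intros E H. rewrite <- (pred_ext _ _ E). exact H. Qed.

Lemma quasi_compact0 : quasi_compact op (fun _ => False).
Proof. intros F _ _. exists []. split; intros ? []. Qed.

Lemma quasi_compactU (S1 S2 : X -> Prop) : quasi_compact op S1 -> quasi_compact op S2 ->
  quasi_compact op (fun x => S1 x \/ S2 x).
Proof.
  intros H1 H2 F HF Hcov.
  destruct (H1 F HF) as [l1 [A1 B1]]. { intros x Hx. apply Hcov. left; exact Hx. }
  destruct (H2 F HF) as [l2 [A2 B2]]. { intros x Hx. apply Hcov. right; exact Hx. }
  exists (l1 ++ l2). split.
  - intros U HU. apply in_app_or in HU. destruct HU; auto.
  - intros x [Hx|Hx].
    + destruct (B1 x Hx) as [U [HU Ux]]. exists U. split; [apply in_or_app; left|]; assumption.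
    + destruct (B2 x Hx) as [U [HU Ux]]. exists U. split; [apply in_or_app; right|]; assumption.
Qed.

Lemma complK (S : X -> Prop) : compl (compl S) = S.
Proof. apply pred_ext. intro x. unfold compl. split; [apply NNPP|auto]. Qed.

Lemma dual_open_single (W : X -> Prop) :
  op (compl W) -> quasi_compact op (compl W) -> dual_open op W.
Proof.
  intros HW QW. exists (fun W' => W' = W). split.
  - intros W' ->. auto.
  - intro x. split; [intro H; exists W; auto|intros [W' [-> H]]; exact H].
Qed.

Section Topology.
Hypothesis Hop : is_topology op.

Lemma open_setT : op (fun _ => True).
Proof. exact (proj1 Hop). Qed.

Lemma open_setI (U V : X -> Prop) : op U -> op V -> op (fun x => U x /\ V x).
Proof. apply (proj1 (proj2 Hop)). Qed.

Lemma open_bigcup (F : (X -> Prop) -> Prop) :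
  (forall U, F U -> op U) -> op (fun x => exists U, F U /\ U x).
Proof. apply (proj2 (proj2 Hop)). Qed.

Lemma open_setU (U V : X -> Prop) : op U -> op V -> op (fun x => U x \/ V x).
Proof.
  intros HU HV.
  replace (fun x => U x \/ V x) with (fun x => exists W, (W = U \/ W = V) /\ W x).
  - apply open_bigcup. intros W [->| ->]; auto.
  - apply pred_ext. intro x. split.
    + intros [W [[->| ->] H]]; auto.
    + intros [H|H]; [exists U|exists V]; auto.
Qed.

Lemma spectral_open_inter_list {A : Type} (F : A -> X -> Prop) (l : list A) : spectral op ->
  (forall a, In a l -> op (F a) /\ quasi_compact op (F a)) ->
  op (fun x => forall a, In a l -> F a x) /\ quasi_compact op (fun x => forall a, In a l -> F a x).
Proof.
  intros [_ [Qtop [Qinter _]]]. induction l as [|a l IH]; intro H.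
  - replace (fun x => forall a, In a [] -> F a x) with (fun _ : X => True).
    + split; [apply open_setT|exact Qtop].
    + apply pred_ext. intro x. split; [intros _ a []|auto].
  - replace (fun x => forall a', In a' (a :: l) -> F a' x) with
      (fun x => F a x /\ (fun x => forall a', In a' l -> F a' x) x).
    + destruct IH as [IH1 IH2]; [intros; apply H; right; auto|].
      destruct (H a (or_introl eq_refl)) as [Ho Hq].
      split; [apply open_setI|apply Qinter]; auto.
    + apply pred_ext. intro x. split.
      * intros [H1 H2] a' [<-|Ha']; [exact H1|exact (H2 a' Ha')].
      * intro H'. split; [apply H'; left|intros a' Ha'; apply H'; right]; auto.
Qed.

End Topology.

End QuasiCompact.

Lemma quasi_compact_image {A B : Type} {opA : (A -> Prop) -> Prop} {opB : (B -> Prop) -> Prop}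
  {h : A -> B} {S : A -> Prop} : continuous opA opB h -> quasi_compact opA S ->
  quasi_compact opB (fun b => exists a, S a /\ h a = b).
Proof.
  intros Hc Hq F HF Hcov.
  pose (pullback := fun (U' : A -> Prop) (U : B -> Prop) => F U /\ U' = (fun a => U (h a))).
  destruct (Hq (fun U' => exists U, pullback U' U)) as [l' [L1 L2]].
  - intros U' [U [FU ->]]. apply Hc. apply HF. exact FU.
  - intros a Sa. destruct (Hcov (h a)) as [U [FU Ua]]. { exists a. split; auto. }
    exists (fun a => U (h a)). split; [exists U; split; auto|exact Ua].
  - destruct (list_choice pullback l' L1) as [l [M1 M2]].
    exists l. split.
    + intros U HU. destruct (M1 U HU) as [U' [_ [FU _]]]. exact FU.
    + intros b [a [Sa <-]]. destruct (L2 a Sa) as [U' [HU' U'a]].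
      destruct (M2 U' HU') as [U [HU [_ E]]]. subst U'. exists U. split; auto.
Qed.

Section SpectralTransport.
Context {X Y : Type} {opX : (X -> Prop) -> Prop} {opY : (Y -> Prop) -> Prop}.
Context {f : X -> Y} {g : Y -> X}.
Hypotheses (gf : forall x, g (f x) = x) (fg : forall y, f (g y) = y).
Hypotheses (cf : continuous opX opY f) (cg : continuous opY opX g).

Lemma quasi_compact_preimage_inverse {S : Y -> Prop} :
  quasi_compact opY S -> quasi_compact opX (fun x => S (f x)).
Proof.
  intro HS. apply quasi_compact_ext with (fun x => exists y, S y /\ g y = x).
  - intro x. split.
    + intros [y [Sy <-]]. rewrite fg. exact Sy.
    + intro H. exists (f x). auto.
  - apply (quasi_compact_image cg HS).
Qed.

Lemma quasi_compact_preimage {S : X -> Prop} :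
  quasi_compact opX S -> quasi_compact opY (fun y => S (g y)).
Proof.
  intro HS. apply quasi_compact_ext with (fun y => exists x, S x /\ f x = y).
  - intro y. split.
    + intros [x [Sx <-]]. rewrite gf. exact Sx.
    + intro H. exists (g y). auto.
  - apply (quasi_compact_image cf HS).
Qed.

Lemma irreducible_closed_preimage {Z : X -> Prop} :
  irreducible_closed opX Z -> irreducible_closed opY (fun y => Z (g y)).
Proof.
  intros [HZc [[z0 Hz0] Hirr]]. split; [|split].
  - exact (cg _ HZc).
  - exists (f z0). rewrite gf. exact Hz0.
  - intros C1 C2 H1 H2 Hsub.
    destruct (Hirr (fun x => C1 (f x)) (fun x => C2 (f x)) (cf _ H1) (cf _ H2)) as [H|H].
    + intros z Zz. apply Hsub. rewrite gf. exact Zz.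
    + left. intros y Zy. rewrite <- (fg y). apply H. exact Zy.
    + right. intros y Zy. rewrite <- (fg y). apply H. exact Zy.
Qed.

Lemma closure_point_image (x0 x : X) :
  closure opX (fun z => z = x0) x <-> closure opY (fun z => z = f x0) (f x).
Proof.
  split.
  - intros H C HC Hsub. apply (H (fun x => C (f x)) (cf _ HC)).
    intros z ->. apply Hsub. reflexivity.
  - intros H C HC Hsub. rewrite <- (gf x).
    apply (H (fun y => C (g y)) (cg _ HC)). intros z ->. rewrite gf. apply Hsub. reflexivity.
Qed.

Lemma spectral_transport : spectral opY -> spectral opX.
Proof.
  intros [T0 [Qtop [Qinter [Basis Generic]]]].
  split; [|split; [|split; [|split]]].
  - intros x y H. rewrite <- (gf x), <- (gf y). f_equal. apply T0. intros U HU.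
    apply (H (fun z => U (f z))). exact (cf _ HU).
  - exact (quasi_compact_preimage_inverse Qtop).
  - intros U V HU QU HV QV.
    apply quasi_compact_ext with (fun x => U (g (f x)) /\ V (g (f x))).
    { intro x. rewrite gf. tauto. }
    apply (@quasi_compact_preimage_inverse (fun y => U (g y) /\ V (g y))).
    apply Qinter; auto using quasi_compact_preimage.
  - intros U HU x Ux.
    destruct (Basis _ (cg _ HU) (f x)) as [V [HV [QV [Vx HVU]]]]. { simpl. rewrite gf. exact Ux. }
    exists (fun x => V (f x)). split; [|split; [|split]]; auto using quasi_compact_preimage_inverse.
    intros z Vz. rewrite <- (gf z). apply HVU. exact Vz.
  - intros Z HZ. destruct (Generic _ (irreducible_closed_preimage HZ)) as [y0 Hy0].
    exists (g y0). intro x. rewrite closure_point_image, fg, <- Hy0, gf. reflexivity.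
Qed.

End SpectralTransport.

Section IdealLatticeTheory.
Variable L : IdealLattice.
Implicit Types a b c d m : L.
Notation le := (@ile L).
Notation mul := (@imul L).
Notation sup := (@isup L).

Lemma le_refl a : le a a.
Proof. destruct (il_ax L) as (H&_). apply H. Qed.
Lemma le_trans a b c : le a b -> le b c -> le a c.
Proof. destruct (il_ax L) as (_&H&_). apply H. Qed.
Lemma le_antisym a b : le a b -> le b a -> a = b.
Proof. destruct (il_ax L) as (_&_&H&_). apply H. Qed.
Lemma sup_ub (A : L -> Prop) a : A a -> le a (sup A).
Proof. destruct (il_ax L) as (_&_&_&H&_). apply H. Qed.
Lemma sup_lub (A : L -> Prop) b : (forall a, A a -> le a b) -> le (sup A) b.
Proof. destruct (il_ax L) as (_&_&_&_&H&_). apply H. Qed.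
Lemma mul_assoc a b c : mul a (mul b c) = mul (mul a b) c.
Proof. destruct (il_ax L) as (_&_&_&_&_&H&_). apply H. Qed.
Lemma sup_of_compacts a : exists A : L -> Prop, (forall c, A c -> compact c) /\ a = sup A.
Proof. destruct (il_ax L) as (_&_&_&_&_&_&H&_). apply H. Qed.
Lemma mul_joinr a b c : mul a (join b c) = join (mul a b) (mul a c).
Proof. destruct (il_ax L) as (_&_&_&_&_&_&_&H&_). apply H. Qed.
Lemma mul_joinl a b c : mul (join a b) c = join (mul a c) (mul b c).
Proof. destruct (il_ax L) as (_&_&_&_&_&_&_&_&H&_). apply H. Qed.
Lemma top_compact : compact (top L).
Proof. destruct (il_ax L) as (_&_&_&_&_&_&_&_&_&H&_). apply H. Qed.
Lemma mul1l a : mul (top L) a = a.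
Proof. destruct (il_ax L) as (_&_&_&_&_&_&_&_&_&_&H&_). apply H. Qed.
Lemma mulr1 a : mul a (top L) = a.
Proof. destruct (il_ax L) as (_&_&_&_&_&_&_&_&_&_&_&H&_). apply H. Qed.
Lemma mul_compact a b : compact a -> compact b -> compact (mul a b).
Proof. destruct (il_ax L) as (_&_&_&_&_&_&_&_&_&_&_&_&H). apply H. Qed.

Lemma join_l a b : le a (join a b).
Proof. apply sup_ub. left; reflexivity. Qed.
Lemma join_r a b : le b (join a b).
Proof. apply sup_ub. right; reflexivity. Qed.
Lemma join_lub a b c : le a c -> le b c -> le (join a b) c.
Proof. intros. apply sup_lub. intros x [->| ->]; auto. Qed.
Lemma le_top a : le a (top L).
Proof. apply sup_ub. exact I. Qed.
Lemma sup_mono (A B : L -> Prop) : (forall x, A x -> B x) -> le (sup A) (sup B).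
Proof. intro H. apply sup_lub. intros x Ax. apply sup_ub. auto. Qed.

Lemma join_idPr {a b} : le a b -> join a b = b.
Proof. intro H. apply le_antisym; auto using join_lub, le_refl, join_r. Qed.

Lemma mul_monor {a b} c : le a b -> le (mul c a) (mul c b).
Proof. intro H. rewrite <- (join_idPr H), mul_joinr. apply join_l. Qed.
Lemma mul_monol {a b} c : le a b -> le (mul a c) (mul b c).
Proof. intro H. rewrite <- (join_idPr H), mul_joinl. apply join_l. Qed.
Lemma mul_mono {a b c d} : le a b -> le c d -> le (mul a c) (mul b d).
Proof. intros. apply le_trans with (mul b c); auto using mul_monol, mul_monor. Qed.
Lemma mul_lel a b : le (mul a b) a.
Proof. rewrite <- (mulr1 a) at 2. apply mul_monor, le_top. Qed.
Lemma mul_ler a b : le (mul a b) b.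
Proof. rewrite <- (mul1l b) at 2. apply mul_monol, le_top. Qed.

Definition bot : L := sup (fun _ => False).
Lemma bot_le a : le bot a.
Proof. apply sup_lub. intros _ []. Qed.
Lemma bot_compact : compact bot.
Proof. intros A _. exists []. split; [intros ? []|apply bot_le]. Qed.

Lemma join_compact {a b} : compact a -> compact b -> compact (join a b).
Proof.
  intros Ha Hb A H.
  destruct (Ha A) as [l1 [H1 K1]]. { apply le_trans with (join a b); auto using join_l. }
  destruct (Hb A) as [l2 [H2 K2]]. { apply le_trans with (join a b); auto using join_r. }
  exists (l1 ++ l2). split.
  - intros x Hx. apply in_app_or in Hx. destruct Hx; auto.
  - apply join_lub.
    + apply le_trans with (1 := K1). apply sup_mono. intros; apply in_or_app; auto.
    + apply le_trans with (1 := K2). apply sup_mono. intros; apply in_or_app; auto.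
Qed.

Lemma le_compacts a b : (forall c, compact c -> le c a -> le c b) -> le a b.
Proof.
  intro H. destruct (sup_of_compacts a) as [A [HA ->]]. apply sup_lub. intros c Ac.
  apply H; auto. apply sup_ub; auto.
Qed.

Lemma not_le_compact a b : ~ le a b -> exists c, compact c /\ le c a /\ ~ le c b.
Proof.
  intro H. apply NNPP. intro H'. apply H. apply le_compacts. intros c Hc Hca.
  apply NNPP. intro. apply H'. exists c. auto.
Qed.

Lemma compact_le_join {m a b} : compact m -> le m (join a b) ->
  exists d1 d2, compact d1 /\ compact d2 /\ le d1 a /\ le d2 b /\ le m (join d1 d2).
Proof.
  intros Hm H.
  destruct (sup_of_compacts a) as [A [HA Ea]]. destruct (sup_of_compacts b) as [B [HB Eb]].
  destruct (Hm (fun x => A x \/ B x)) as [l [Hl Hml]].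
  { apply le_trans with (1 := H). apply join_lub.
    - rewrite Ea. apply sup_mono; auto.
    - rewrite Eb. apply sup_mono; auto. }
  enough (K : exists d1 d2, compact d1 /\ compact d2 /\ le d1 a /\ le d2 b /\
                            le (sup (fun x => In x l)) (join d1 d2)).
  { destruct K as [d1 [d2 [C1 [C2 [D1 [D2 E]]]]]].
    exists d1, d2. repeat split; auto. apply le_trans with (1 := Hml). exact E. }
  clear Hml. induction l as [|x l IH].
  - exists bot, bot. repeat split; auto using bot_compact, bot_le.
  - destruct IH as [d1 [d2 [C1 [C2 [D1 [D2 E]]]]]]. { intros; apply Hl; right; auto. }
    assert (Hx : le x (join d1 (join x d2)) /\ le x (join (join x d1) d2)).
    { split; eauto using le_trans, join_l, join_r. }
    assert (Hl' : le (sup (fun y => In y l)) (join d1 (join x d2)) /\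
                  le (sup (fun y => In y l)) (join (join x d1) d2)).
    { split; apply le_trans with (1 := E); apply join_lub; eauto using le_trans, join_l, join_r. }
    destruct (Hl x (or_introl eq_refl)) as [Ax|Bx].
    + exists (join x d1), d2. repeat split; auto using join_compact.
      * apply join_lub; auto. rewrite Ea. apply sup_ub; auto.
      * apply sup_lub. intros y [<-|Hy]; [apply Hx|apply le_trans with (2 := proj2 Hl')].
        apply sup_ub; auto.
    + exists d1, (join x d2). repeat split; auto using join_compact.
      * apply join_lub; auto. rewrite Eb. apply sup_ub; auto.
      * apply sup_lub. intros y [<-|Hy]; [apply Hx|apply le_trans with (2 := proj1 Hl')].
        apply sup_ub; auto.
Qed.

Lemma prime_not_top {p : L} : prime p -> ~ le (top L) p.
Proof. intros [Hp _] H. apply Hp. apply le_antisym; auto using le_top. Qed.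

Lemma prime_mul {p : L} a b : prime p -> (le (mul a b) p <-> le a p \/ le b p).
Proof.
  intros Hp. split.
  - apply (proj2 Hp).
  - intros [H|H]; [apply le_trans with a|apply le_trans with b]; auto using mul_lel, mul_ler.
Qed.

Lemma prime_semiprime {p : L} : prime p -> semiprime p.
Proof. intros Hp b H. apply (prime_mul b b Hp) in H. destruct H; auto. Qed.

Definition prodl (l : list L) : L := fold_right mul (top L) l.

Lemma prodl_compact l : (forall c, In c l -> compact c) -> compact (prodl l).
Proof.
  induction l as [|x l IH]; intro H; simpl.
  - apply top_compact.
  - apply mul_compact; auto using in_eq, in_cons.
Qed.

Lemma prodl_le l c : In c l -> le (prodl l) c.
Proof.
  induction l as [|x l IH]; simpl; [intros []|].
  intros [<-|H]; [apply mul_lel|]. apply le_trans with (prodl l); auto using mul_ler.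
Qed.

Lemma prodl_app l1 l2 : prodl (l1 ++ l2) = mul (prodl l1) (prodl l2).
Proof. induction l1 as [|x l IH]; simpl; [rewrite mul1l|rewrite IH, mul_assoc]; reflexivity. Qed.

Lemma prime_prodl {p : L} l : prime p -> (le (prodl l) p <-> exists c, In c l /\ le c p).
Proof.
  intros Hp. induction l as [|x l IH]; simpl.
  - split; [intro H; exfalso; exact (prime_not_top Hp H)|intros [c [[] _]]].
  - rewrite (prime_mul _ _ Hp), IH. split.
    + intros [H|[c [Hc H]]]; eauto.
    + intros [c [[<-|Hc] H]]; [left|right]; eauto.
Qed.

Definition avoids (M : L -> Prop) (y : L) : Prop := forall m, M m -> ~ le m y.

Section PrimeAvoiding.
Variable M : L -> Prop.
Hypotheses (M_compact : forall m, M m -> compact m)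
           (M_mul : forall m1 m2, M m1 -> M m2 -> M (mul m1 m2)) (M_top : M (top L)).

Lemma maximal_avoiding_prime (p : L) :
  avoids M p -> (forall y, le p y -> avoids M y -> y = p) -> prime p.
Proof.
  intros HpM Hmax.
  assert (Hnot : forall x, ~ le x p -> exists m, M m /\ le m (join p x)).
  { intros x Hx. apply NNPP. intro H. apply Hx.
    assert (E : join p x = p).
    { apply Hmax; [apply join_l|]. intros m Mm Hm. apply H. exists m; auto. }
    rewrite <- E. apply join_r. }
  split.
  - intro E. apply (HpM _ M_top). rewrite E. apply le_refl.
  - intros x y Hxy. apply NNPP. intro H. apply not_or_and in H. destruct H as [Hx Hy].
    destruct (Hnot x Hx) as [m1 [M1 H1]]. destruct (Hnot y Hy) as [m2 [M2 H2]].
    apply (HpM _ (M_mul _ _ M1 M2)).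
    apply le_trans with (mul (join p x) (join p y)); [apply mul_mono; auto|].
    rewrite mul_joinl. apply join_lub; [apply mul_lel|].
    rewrite mul_joinr. apply join_lub; [apply mul_ler|exact Hxy].
Qed.

Lemma exists_prime_avoiding a : avoids M a -> exists p, prime p /\ le a p /\ avoids M p.
Proof.
  intros Ma.
  destruct (@zorn_maximal L (fun y => le a y /\ avoids M y) le) as [p [[Hap HpM] Hmax]].
  - apply le_refl.
  - apply le_trans.
  - intros s t _ _. apply le_antisym.
  - intros A AT Htot.
    exists (sup (fun y => y = a \/ A y)). split.
    + split; [apply sup_ub; left; auto|].
      intros m Mm Hm.
      destruct (M_compact _ Mm _ Hm) as [l [Hl Hml]].
      destruct (chain_list_ub le a A l) as [y [Hy Hly]].
      * apply le_refl.
      * apply le_trans.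
      * intros y Ay. apply (AT y Ay).
      * exact Htot.
      * exact Hl.
      * assert (Ty : avoids M y) by (destruct Hy as [->|Ay]; [exact Ma|apply (AT y Ay)]).
        apply (Ty m Mm). apply le_trans with (1 := Hml). apply sup_lub. auto.
    + intros s As. apply sup_ub. right; auto.
  - exists p. split; [|split; auto].
    apply maximal_avoiding_prime; auto. intros y Hpy HyM.
    apply Hmax; auto. split; auto. apply le_trans with p; auto.
Qed.

End PrimeAvoiding.

Fixpoint sqpow (b : L) (n : nat) : L :=
  match n with O => b | S n => mul (sqpow b n) (sqpow b n) end.

Lemma sqpow_compact b n : compact b -> compact (sqpow b n).
Proof. intro H. induction n; simpl; auto using mul_compact. Qed.

Lemma sqpow_le b {n k} : (n <= k)%nat -> le (sqpow b k) (sqpow b n).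
Proof. induction 1; simpl; eauto using le_refl, le_trans, mul_lel. Qed.

Lemma prime_sqpow {p b : L} {n} : prime p -> le (sqpow b n) p -> le b p.
Proof. intro Hp. induction n; simpl; auto. intro H. apply (prime_mul _ _ Hp) in H. tauto. Qed.

Lemma exists_prime_avoiding_sqpow a b : compact b -> (forall n, ~ le (sqpow b n) a) ->
  exists p, prime p /\ le a p /\ ~ le b p.
Proof.
  intros Hb Hn.
  pose (M := fun m => compact m /\ exists n, le (sqpow b n) m).
  destruct (@exists_prime_avoiding M) with (a := a) as [p [Hp [Hap HM]]].
  - intros m [H _]; exact H.
  - intros m1 m2 [C1 [n1 H1]] [C2 [n2 H2]]. split; [apply mul_compact; auto|].
    exists (S (Nat.max n1 n2)). simpl. apply mul_mono.
    + apply le_trans with (2 := H1). apply sqpow_le. lia.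
    + apply le_trans with (2 := H2). apply sqpow_le. lia.
  - split; [apply top_compact|]. exists O. apply le_top.
  - intros m [_ [n H]] Hm. apply (Hn n). apply le_trans with m; auto.
  - exists p. split; [exact Hp|split; [exact Hap|]].
    intro H. apply (HM b); auto. split; auto. exists O. apply le_refl.
Qed.

Lemma semiprime_prime_separation a b : semiprime a -> compact b -> ~ le b a ->
  exists p, prime p /\ le a p /\ ~ le b p.
Proof.
  intros Ha Hb Hba. apply exists_prime_avoiding_sqpow; auto.
  intros n. induction n; simpl; auto.
Qed.

Definition rad a : L := sup (fun b => forall p, prime p -> le a p -> le b p).

Lemma rad_prime a {p : L} : prime p -> (le (rad a) p <-> le a p).
Proof.
  intro Hp. split; intro H.
  - apply le_trans with (2 := H). apply sup_ub. auto.
  - apply sup_lub. intros b Hb. auto.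
Qed.

Lemma rad_semiprime a : semiprime (rad a).
Proof.
  intros b Hb. apply sup_ub. intros p Hp Hap.
  apply (prime_semiprime Hp). apply le_trans with (1 := Hb). apply rad_prime; auto.
Qed.

Definition joinl (l : list L) : L := fold_right join bot l.

Lemma joinl_compact l : (forall c, In c l -> compact c) -> compact (joinl l).
Proof.
  induction l as [|x l IH]; intro H; simpl.
  - apply bot_compact.
  - apply join_compact; auto using in_eq, in_cons.
Qed.

Lemma joinl_lub l a : (forall c, In c l -> le c a) -> le (joinl l) a.
Proof.
  induction l as [|x l IH]; intro H; simpl.
  - apply bot_le.
  - apply join_lub; auto using in_eq, in_cons.
Qed.

Lemma le_joinl l c : In c l -> le c (joinl l).
Proof.
  induction l as [|x l IH]; simpl; [intros []|].
  intros [<-|H]; [apply join_l|]. apply le_trans with (joinl l); auto using join_r.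
Qed.

Lemma spec_inj (p q : Spec L) : proj1_sig p = proj1_sig q -> p = q.
Proof. destruct p, q. simpl. intros ->. f_equal. apply proof_irrelevance. Qed.

Lemma prime_supp (p : Spec L) a b : supp (mul a b) p <-> supp a p /\ supp b p.
Proof. unfold supp. rewrite (prime_mul _ _ (proj2_sig p)). tauto. Qed.

Notation SO := (@star_open L).
Notation ZO := (@zariski_open L).

(* If some power [sqpow c n] lies below the join of the cover, compactness of that power
   yields a finite subcover; otherwise a prime above the cover misses [c]. *)
Lemma supp_zariski_quasi_compact c : compact c -> quasi_compact ZO (supp c).
Proof.
  intros Hc F HF Hcov.
  pose (A := fun a => exists U, F U /\ forall p, U p <-> supp a p).
  destruct (classic (exists n, le (sqpow c n) (sup A))) as [[n Hn]|Hn].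
  - destruct (sqpow_compact c n Hc _ Hn) as [la [Hla Hle]].
    destruct (list_choice (fun a U => F U /\ forall p, U p <-> supp a p) la Hla)
      as [lU [M1 M2]].
    exists lU. split.
    + intros U HU. destruct (M1 U HU) as [a [_ [FU _]]]. exact FU.
    + intros p Hp.
      assert (Hnp : ~ le (sqpow c n) (proj1_sig p)) by (intro H; exact (Hp (prime_sqpow (proj2_sig p) H))).
      assert (exists a, In a la /\ ~ le a (proj1_sig p)) as [a [Ha Hap]].
      { apply NNPP. intro H. apply Hnp. apply le_trans with (1 := Hle). apply sup_lub.
        intros a Ha. apply NNPP. intro. apply H. exists a; auto. }
      destruct (M2 a Ha) as [U [HU [_ E]]]. exists U. split; auto. apply E. exact Hap.
  - destruct (exists_prime_avoiding_sqpow (sup A) c Hc) as [q [Hq [Hsq Hcq]]].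
    { intros n H. apply Hn. exists n; auto. }
    destruct (Hcov (exist _ q Hq) Hcq) as [U [FU HU]].
    destruct (HF U FU) as [a Ha].
    apply Ha in HU. exfalso. apply HU. simpl. apply le_trans with (2 := Hsq). apply sup_ub.
    exists U. split; auto.
Qed.

Lemma zariski_quasi_compact_supp (S : Spec L -> Prop) : ZO S -> quasi_compact ZO S ->
  exists c, compact c /\ forall p, S p <-> supp c p.
Proof.
  intros [a Ha] Hq.
  pose (approx := fun U c => compact c /\ le c a /\ U = supp c).
  destruct (Hq (fun U => exists c, approx U c)) as [lU [HlU Hcov]].
  - intros U [c [_ [_ ->]]]. exists c. reflexivity.
  - intros p Sp. apply Ha in Sp. destruct (not_le_compact _ _ Sp) as [c [Hc [Hca Hcp]]].
    exists (supp c). split; [exists c; split; auto|exact Hcp].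
  - destruct (list_choice approx lU HlU) as [lc [M1 M2]].
    exists (joinl lc). split.
    + apply joinl_compact. intros c Hc. destruct (M1 c Hc) as [U [_ [Cc _]]]. exact Cc.
    + intro p. split.
      * intros Sp Hle. destruct (Hcov p Sp) as [U [HU Up]].
        destruct (M2 U HU) as [c [Hc [_ [_ ->]]]]. apply Up.
        apply le_trans with (2 := Hle). apply le_joinl. exact Hc.
      * intro H. apply Ha. intro H'. apply H. apply le_trans with a; auto.
        apply joinl_lub. intros c Hc. destruct (M1 c Hc) as [U [_ [_ [Hca _]]]]. exact Hca.
Qed.

Lemma star_openP (U : Spec L -> Prop) : SO U <->
  forall p, U p -> exists c, compact c /\ Vz c p /\ subset (Vz c) U.
Proof.
  split.
  - intros [F [HF HU]] p Up. apply HU in Up. destruct Up as [W [FW Wp]].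
    destruct (HF W FW) as [Ho Hq].
    destruct (zariski_quasi_compact_supp _ Ho Hq) as [c [Hc E]].
    assert (E' : forall q, W q <-> Vz c q).
    { intro q. specialize (E q). unfold compl, supp in E. unfold Vz. split; intro H.
      - apply NNPP. intro H'. apply E in H'. auto.
      - apply NNPP. intro H'. apply E in H'. auto. }
    exists c. split; [exact Hc|split; [apply E'; exact Wp|]].
    intros q Hq'. apply HU. exists W. split; auto. apply E'. exact Hq'.
  - intro H. exists (fun W => exists c, compact c /\ W = Vz c /\ subset (Vz c) U).
    split.
    + intros W [c [Hc [-> _]]]. split.
      * exists c. intro p. unfold compl, Vz, supp. reflexivity.
      * apply (supp_zariski_quasi_compact c Hc).
    + intro p. split.
      * intro Up. destruct (H p Up) as [c [Hc [Hcp HV]]]. exists (Vz c). split; auto.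
        exists c. auto.
      * intros [W [[c [_ [-> HV]]] Wp]]. auto.
Qed.

Lemma Vz_open {c} : compact c -> SO (Vz c).
Proof. intro Hc. apply star_openP. intros p Hp. exists c. split; auto. split; auto. intros q; auto. Qed.

Lemma supp_closed {c} : compact c -> closed SO (supp c).
Proof.
  intro Hc. apply star_openP. intros p Hp. exists c. split; auto. split.
  - apply NNPP. exact Hp.
  - intros q Hq H. exact (H Hq).
Qed.

(* Prime avoidance for the products of compacts [c] whose [V(c)] lies in one member of the
   cover: a prime above [d] avoiding them all would not be covered. *)
Lemma Vz_quasi_compact d : compact d -> quasi_compact SO (Vz d).
Proof.
  intros Hd F HF Hcov. apply NNPP. intro Hno.
  pose (C := fun c => compact c /\ exists U, F U /\ subset (Vz c) U).
  pose (M := fun m => compact m /\ exists l, (forall c, In c l -> C c) /\ le (prodl l) m).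
  destruct (exists_prime_avoiding M) with (a := d) as [q [Hq [Hdq HqM]]].
  - intros m [H _]; exact H.
  - intros m1 m2 [C1 [l1 [H1 K1]]] [C2 [l2 [H2 K2]]]. split; [apply mul_compact; auto|].
    exists (l1 ++ l2). split.
    + intros c Hc. apply in_app_or in Hc. destruct Hc; auto.
    + rewrite prodl_app. apply mul_mono; auto.
  - split; [apply top_compact|]. exists []. split; [intros ? []|apply le_refl].
  - intros m [Hm [l [Hl Hle]]] Hmd.
    destruct (list_choice (fun c U => F U /\ subset (Vz c) U) l) as [lU [M1 M2]].
    { intros c Hc. exact (proj2 (Hl c Hc)). }
    apply Hno. exists lU. split.
    + intros U HU. destruct (M1 U HU) as [c [_ [FU _]]]. exact FU.
    + intros p Hp. apply NNPP. intro Hnc.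
      assert (~ le (prodl l) (proj1_sig p)).
      { rewrite (prime_prodl _ (proj2_sig p)). intros [c [Hc Hcp]].
        destruct (M2 c Hc) as [U [HU [_ HV]]]. apply Hnc. exists U. split; auto. }
      apply H. apply le_trans with m; auto. apply le_trans with d; auto.
  - destruct (Hcov (exist _ q Hq) Hdq) as [U [FU Uq]].
    destruct (proj1 (star_openP U) (HF U FU) _ Uq) as [c [Hc [Hcq HV]]].
    apply (HqM c); auto. split; auto. exists [c]. split.
    + intros c' [<-|[]]. split; auto. exists U; auto.
    + simpl. apply mul_lel.
Qed.

Definition Vz_list (l : list L) : Spec L -> Prop :=
  fun p => exists c, In c l /\ Vz c p.

Lemma Vz_list_quasi_compact l : (forall c, In c l -> compact c) -> quasi_compact SO (Vz_list l).
Proof.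
  induction l as [|c l IH]; intro H.
  - apply quasi_compact_ext with (fun _ => False); [|apply quasi_compact0].
    intro p. split; [intros []|intros [c [[] _]]].
  - apply quasi_compact_ext with (fun p => Vz c p \/ Vz_list l p).
    + intro p. split.
      * intros [Hp|[c' [Hc' Hp]]]; [exists c|exists c']; split; auto using in_eq, in_cons.
      * intros [c' [[<-|Hc'] Hp]]; [left|right; exists c']; auto.
    + apply quasi_compactU; auto using in_eq, in_cons, Vz_quasi_compact.
Qed.

Lemma star_quasi_compact_open_Vz_list (U : Spec L -> Prop) : SO U -> quasi_compact SO U ->
  exists l, (forall c, In c l -> compact c) /\ forall p, U p <-> Vz_list l p.
Proof.
  intros Ho Hq.
  pose (basic := fun W c => compact c /\ W = Vz c /\ subset (Vz c) U).
  destruct (Hq (fun W => exists c, basic W c)) as [lW [H1 H2]].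
  - intros W [c [Hc [-> _]]]. apply Vz_open; auto.
  - intros p Up. destruct (proj1 (star_openP U) Ho p Up) as [c [Hc [Hcp HV]]].
    exists (Vz c). split; auto. exists c. split; auto.
  - destruct (list_choice basic lW H1) as [l [M1 M2]].
    exists l. split.
    + intros c Hc. destruct (M1 c Hc) as [W [_ [Hc' _]]]. exact Hc'.
    + intro p. split.
      * intro Up. destruct (H2 p Up) as [W [HW Wp]]. destruct (M2 W HW) as [c [Hc [_ [-> _]]]].
        exists c. auto.
      * intros [c [Hc Hcp]]. destruct (M1 c Hc) as [W [_ [_ [_ HV]]]]. apply HV. exact Hcp.
Qed.

Lemma star_T0 (p q : Spec L) : (forall U, SO U -> (U p <-> U q)) -> p = q.
Proof.
  intro H. apply spec_inj. apply le_antisym; apply le_compacts; intros c Hc Hcp;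
    apply (H (Vz c) (Vz_open Hc)); exact Hcp.
Qed.

Section GenericPoint.
Variable Z : Spec L -> Prop.
Hypothesis HZ : irreducible_closed SO Z.

Definition Zsupp (m : L) : Prop := compact m /\ subset Z (supp m).

Lemma Zsupp_mul m1 m2 : Zsupp m1 -> Zsupp m2 -> Zsupp (mul m1 m2).
Proof.
  intros [C1 H1] [C2 H2]. split; [apply mul_compact; auto|].
  intros p Zp. apply prime_supp. auto.
Qed.

Lemma Zsupp_top : Zsupp (top L).
Proof. split; [apply top_compact|]. intros p _. exact (prime_not_top (proj2_sig p)). Qed.

Lemma avoids_Zsupp_in_Z q (Hq : prime q) : avoids Zsupp q -> Z (exist _ q Hq).
Proof.
  intros HM. apply NNPP. intro HnZ.
  destruct (proj1 (star_openP _) (proj1 HZ) _ HnZ) as [c [Hc [Hcq HV]]].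
  apply (HM c); auto. split; auto. intros p Zp Hcp. exact (HV p Hcp Zp).
Qed.

Lemma Z_directed {p1 p2} : Z p1 -> Z p2 ->
  exists p, Z p /\ le (proj1_sig p1) (proj1_sig p) /\ le (proj1_sig p2) (proj1_sig p).
Proof.
  intros Z1 Z2.
  destruct (exists_prime_avoiding Zsupp) with (a := join (proj1_sig p1) (proj1_sig p2))
    as [q [Hq [Hjq HqM]]].
  - intros m [Hm _]; exact Hm.
  - exact Zsupp_mul.
  - exact Zsupp_top.
  - intros m [Hm HmZ] Hle.
    destruct (compact_le_join Hm Hle) as [d1 [d2 [Cd1 [Cd2 [D1 [D2 E]]]]]].
    destruct (proj2 (proj2 HZ) (supp d1) (supp d2) (supp_closed Cd1) (supp_closed Cd2)) as [H|H].
    + intros r Zr. apply NNPP. intro Hn. apply not_or_and in Hn. destruct Hn as [N1 N2].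
      apply (HmZ r Zr). apply le_trans with (1 := E). unfold supp in N1, N2.
      apply join_lub; apply NNPP; auto.
    + exact (H p1 Z1 D1).
    + exact (H p2 Z2 D2).
  - exists (exist _ q Hq). split; [apply avoids_Zsupp_in_Z; exact HqM|].
    simpl. split; apply le_trans with (2 := Hjq); auto using join_l, join_r.
Qed.

Lemma Z_list_ub l : (forall y, In y l -> exists p, Z p /\ proj1_sig p = y) ->
  exists p, Z p /\ forall y, In y l -> le y (proj1_sig p).
Proof.
  induction l as [|y l IH]; intro Hl.
  - destruct (proj1 (proj2 HZ)) as [z0 Hz0]. exists z0. split; auto. intros ? [].
  - destruct IH as [p [Zp Hp]]. { intros; apply Hl; right; auto. }
    destruct (Hl y (or_introl eq_refl)) as [p' [Zp' <-]].
    destruct (Z_directed Zp Zp') as [r [Zr [R1 R2]]].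
    exists r. split; auto. intros y [<-|Hy]; [exact R2|]. apply le_trans with (proj1_sig p); auto.
Qed.

(* The generic point is a prime above [sup Z] avoiding every compact [m] with [Z ⊆ supp m];
   such [m] cannot lie below [sup Z] by directedness of [Z]. *)
Lemma star_generic_point : exists x, forall y, Z y <-> closure SO (fun z => z = x) y.
Proof.
  pose (S := fun y => exists p, Z p /\ proj1_sig p = y).
  destruct (exists_prime_avoiding Zsupp) with (a := sup S) as [q [Hq [HSq HqM]]].
  - intros m [Hm _]; exact Hm.
  - exact Zsupp_mul.
  - exact Zsupp_top.
  - intros m [Hm HmZ] Hle. destruct (Hm S Hle) as [l [Hl Hml]].
    destruct (Z_list_ub l Hl) as [p [Zp Hp]]. apply (HmZ p Zp). apply le_trans with (1 := Hml).
    apply sup_lub. exact Hp.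
  - exists (exist _ q Hq). intro y. split.
    + intros Zy C HC Hsub. apply NNPP. intro HnC.
      destruct (proj1 (star_openP _) HC _ HnC) as [c [Hc [Hcy HV]]].
      apply (HV (exist _ q Hq)); [|apply Hsub; reflexivity].
      unfold Vz. simpl. apply le_trans with (1 := Hcy). apply le_trans with (2 := HSq).
      apply sup_ub. exists y; auto.
    + intro H. apply H; [exact (proj1 HZ)|]. intros z ->. apply avoids_Zsupp_in_Z. exact HqM.
Qed.

End GenericPoint.

Lemma star_spectral : spectral SO.
Proof.
  split; [|split; [|split; [|split]]].
  - exact star_T0.
  - apply quasi_compact_ext with (Vz bot); [|apply Vz_quasi_compact, bot_compact].
    intros p; split; auto. intros _. apply bot_le.
  - intros U V HU QU HV QV.
    destruct (star_quasi_compact_open_Vz_list _ HU QU) as [lu [Cu Eu]].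
    destruct (star_quasi_compact_open_Vz_list _ HV QV) as [lv [Cv Ev]].
    apply quasi_compact_ext with (Vz_list (flat_map (fun c => map (join c) lv) lu)).
    + intro p. rewrite Eu, Ev. split.
      * intros [e [He Hep]]. apply in_flat_map in He. destruct He as [c [Hc He]].
        apply in_map_iff in He. destruct He as [d [<- Hd]].
        split; [exists c|exists d]; split; auto; apply le_trans with (2 := Hep);
          auto using join_l, join_r.
      * intros [[c [Hc Hcp]] [d [Hd Hdp]]]. exists (join c d). split.
        -- apply in_flat_map. exists c. split; auto. apply in_map_iff. exists d. auto.
        -- apply join_lub; auto.
    + apply Vz_list_quasi_compact. intros e He. apply in_flat_map in He.
      destruct He as [c [Hc He]]. apply in_map_iff in He. destruct He as [d [<- Hd]].
      apply join_compact; auto.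
  - intros U HU p Up. destruct (proj1 (star_openP U) HU p Up) as [c [Hc [Hcp HV]]].
    exists (Vz c). repeat split; auto using Vz_open, Vz_quasi_compact.
  - exact star_generic_point.
Qed.

Section SupportData.
Variables (X : Type) (opX : (X -> Prop) -> Prop) (sigma : L -> X -> Prop) (f : X -> Spec L).
Hypothesis Hs : support_datum L opX sigma.
Hypothesis Hf : forall a : L, compact a -> forall x, sigma a x <-> supp a (f x).

Notation phi := (phi_map L sigma).
Notation psi := (psi_map L sigma).

Lemma sigma_closed {c} : compact c -> closed opX (sigma c).
Proof. exact (proj1 Hs c). Qed.

Lemma phi_supp a x : phi a x <-> supp a (f x).
Proof.
  split.
  - intros [b [Hb [Hba Hsb]]] H. apply (Hf b Hb) in Hsb. apply Hsb. apply le_trans with a; auto.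
  - intro H. destruct (not_le_compact _ _ H) as [c [Hc [Hca Hcx]]].
    exists c. split; [exact Hc|split; [exact Hca|apply Hf; auto]].
Qed.

Lemma le_psi {Y b} : compact b -> subset (sigma b) Y -> le b (psi Y).
Proof. intros Hb H. apply sup_ub. split; auto. Qed.

Lemma phi_psi_sub Y : subset (phi (psi Y)) Y.
Proof.
  intros x [b [Hb [Hbpsi Hsb]]]. destruct (Hb _ Hbpsi) as [lb [Hlb Hble]].
  apply (Hf b Hb) in Hsb.
  assert (exists b', In b' lb /\ supp b' (f x)) as [b' [Hb' Hb'x]].
  { apply NNPP. intro H. apply Hsb. apply le_trans with (1 := Hble). apply sup_lub.
    intros b' Hb'. apply NNPP. intro. apply H. exists b'; auto. }
  destruct (Hlb b' Hb') as [Cb' Sb']. apply Sb'. apply Hf; auto.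
Qed.

Lemma psi_semiprime Y : (forall x, phi (psi Y) x <-> Y x) -> semiprime (psi Y).
Proof.
  intros Heq b Hbb. apply le_compacts. intros c Hc Hcb. apply le_psi; auto. intros z Hz.
  apply Heq, phi_supp. intro H. apply (Hf c Hc) in Hz. apply Hz.
  apply (prime_semiprime (proj2_sig (f z))).
  apply le_trans with (mul b b); [apply mul_mono; auto|]. apply le_trans with (psi Y); auto.
Qed.

Section FromHomeomorphism.
Variable g : Spec L -> X.
Hypotheses (gf : forall x, g (f x) = x) (fg : forall p, f (g p) = p).
Hypotheses (cf : continuous opX (@star_open L) f) (cg : continuous (@star_open L) opX g).

Lemma compl_sigma_quasi_compact {c} : compact c -> quasi_compact opX (compl (sigma c)).
Proof.
  intro Hc. apply quasi_compact_ext with (fun x => exists p, Vz c p /\ g p = x).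
  - intro x. unfold compl. rewrite (Hf c Hc). split.
    + intros [p [Hp <-]]. rewrite fg. unfold supp. auto.
    + intro H. exists (f x). split; [apply NNPP; exact H|apply gf].
  - exact (quasi_compact_image cg (Vz_quasi_compact c Hc)).
Qed.

Lemma phi_dual_open a : dual_open opX (phi a).
Proof.
  exists (fun W => exists c, compact c /\ le c a /\ W = sigma c). split.
  - intros W [c [Hc [_ ->]]]. exact (conj (sigma_closed Hc) (compl_sigma_quasi_compact Hc)).
  - intro x. split.
    + intros [b [Hb [Hba Hsb]]]. exists (sigma b). split; auto. exists b; auto.
    + intros [W [[c [Hc [Hca ->]]] Hw]]. exists c; auto.
Qed.

Lemma psi_phi a : semiprime a -> psi (phi a) = a.
Proof.
  intro Ha. apply le_antisym.
  - apply sup_lub. intros b [Hb Hsub]. apply NNPP. intro Hba.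
    destruct (semiprime_prime_separation a b Ha Hb Hba) as [p [Hp [Hap Hbp]]].
    assert (Hsb : sigma b (g (exist _ p Hp))) by (apply Hf; auto; rewrite fg; exact Hbp).
    apply Hsub, phi_supp in Hsb. rewrite fg in Hsb. exact (Hsb Hap).
  - apply le_compacts. intros c Hc Hca. apply le_psi; auto. intros x Hx. exists c. auto.
Qed.

(* A quasi-compact open of Spec^* is a finite union of [V(c)], so its complement is [supp]
   of the product of those [c]. *)
Lemma quasi_compact_open_compl_sigma (W : X -> Prop) :
  opX (compl W) -> quasi_compact opX (compl W) -> exists e, compact e /\ forall x, W x <-> sigma e x.
Proof.
  intros Ho Hq.
  destruct (star_quasi_compact_open_Vz_list (fun p => compl W (g p))) as [l [Hl El]].
  - exact (cg _ Ho).
  - apply quasi_compact_ext with (fun p => exists x, compl W x /\ f x = p).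
    + intro p. split; [intros [x [Hx <-]]; rewrite gf; exact Hx|intro H; exists (g p); auto].
    + exact (quasi_compact_image cf Hq).
  - exists (prodl l). split; [apply prodl_compact; auto|]. intro x.
    rewrite (Hf _ (prodl_compact _ Hl)). unfold supp. rewrite (prime_prodl _ (proj2_sig (f x))).
    specialize (El (f x)). unfold compl in El. rewrite gf in El. unfold Vz_list, Vz in El.
    split.
    + intros Wx H. apply El in H. exact (H Wx).
    + intro H. apply NNPP. intro Hn. apply H, El. exact Hn.
Qed.

Lemma phi_psi_dual_open Y : dual_open opX Y -> forall x, phi (psi Y) x <-> Y x.
Proof.
  intros [Fm [HF HY]] x. split; [apply phi_psi_sub|].
  intro Yx. apply HY in Yx. destruct Yx as [W [FW Wx]].
  destruct (HF W FW) as [Ho Hq].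
  destruct (quasi_compact_open_compl_sigma _ Ho Hq) as [e [He Ee]].
  exists e. split; [exact He|split; [|apply Ee; exact Wx]].
  apply le_psi; auto. intros z Hz. apply HY. exists W. split; auto. apply Ee; auto.
Qed.

Lemma classifying_of_inverse : classifying L opX sigma.
Proof.
  split; [|split].
  - exact (spectral_transport gf fg cf cg star_spectral).
  - intros a Ha. exact (conj (phi_dual_open a) (psi_phi a Ha)).
  - intros Y HY. assert (E := phi_psi_dual_open Y HY). exact (conj (psi_semiprime Y E) E).
Qed.

End FromHomeomorphism.

Lemma homeomorphism_classifying : homeomorphism opX (@star_open L) f -> classifying L opX sigma.
Proof. intros [g [gf [fg [cf cg]]]]. exact (classifying_of_inverse g gf fg cf cg). Qed.

Section FromClassifying.
Hypothesis HX : is_topology opX.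
Hypothesis Hcl : classifying L opX sigma.

Lemma X_T0 x y : (forall U, opX U -> (U x <-> U y)) -> x = y.
Proof. apply (proj1 (proj1 Hcl)). Qed.
Lemma X_quasi_compact_open_basis U : opX U -> forall x, U x ->
  exists V, opX V /\ quasi_compact opX V /\ V x /\ subset V U.
Proof. apply (proj1 (proj2 (proj2 (proj2 (proj1 Hcl))))). Qed.
Lemma X_generic_point Z : irreducible_closed opX Z ->
  exists x, forall y, Z y <-> closure opX (fun z => z = x) y.
Proof. apply (proj2 (proj2 (proj2 (proj2 (proj1 Hcl))))). Qed.

Lemma psi_phi_classifying a : semiprime a -> psi (phi a) = a.
Proof. intro Ha. exact (proj2 (proj1 (proj2 Hcl) a Ha)). Qed.

Lemma phi_classifying_dual_open a : semiprime a -> dual_open opX (phi a).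
Proof. intro Ha. exact (proj1 (proj1 (proj2 Hcl) a Ha)). Qed.

Lemma phi_psi_classifying Y : dual_open opX Y -> forall x, phi (psi Y) x <-> Y x.
Proof. intro HY. exact (proj2 (proj2 (proj2 Hcl) Y HY)). Qed.

Lemma quasi_compact_open_Vz V : opX V -> quasi_compact opX V ->
  forall x, V x <-> Vz (psi (compl V)) (f x).
Proof.
  intros HV QV x.
  assert (E := phi_psi_classifying (compl V) ltac:(apply dual_open_single; rewrite complK; auto) x).
  rewrite phi_supp in E. unfold compl, supp, Vz in *. split; intro H.
  - apply NNPP. intro H'. apply E in H'. exact (H' H).
  - apply NNPP. intro H'. apply E in H'. exact (H' H).
Qed.

Lemma open_up_closed V x y : opX V -> V x -> le (proj1_sig (f x)) (proj1_sig (f y)) -> V y.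
Proof.
  intros HV Vx Hle. destruct (X_quasi_compact_open_basis V HV x Vx) as [V' [HV' [QV' [V'x V'V]]]].
  apply V'V. apply (quasi_compact_open_Vz V' HV' QV'). apply le_trans with (2 := Hle).
  apply (quasi_compact_open_Vz V' HV' QV'). exact V'x.
Qed.

Lemma f_inj x y : f x = f y -> x = y.
Proof.
  intro Exy. apply X_T0. intros U HU.
  split; intro H; eapply open_up_closed; eauto; rewrite Exy; apply le_refl.
Qed.

Section Surjective.
Variable P : L.
Hypothesis HP : prime P.

Definition below_P (x : X) : Prop := le (proj1_sig (f x)) P.

Lemma le_P_of_sigma_sub_phi {d} : compact d -> subset (sigma d) (phi P) -> le d P.
Proof. intros Hd H. rewrite <- (psi_phi_classifying P (prime_semiprime HP)). apply le_psi; auto. Qed.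

Lemma sigma_disjoint_open (V : X -> Prop) : opX V -> quasi_compact opX V ->
  (forall x, V x -> ~ below_P x) -> exists d, compact d /\ ~ le d P /\ forall x, V x -> ~ sigma d x.
Proof.
  intros HV QV Hdis.
  pose (cover := fun U d => compact d /\ ~ le d P /\ U = compl (sigma d)).
  destruct (QV (fun U => exists d, cover U d)) as [lU [H1 H2]].
  - intros U [d [Hd [_ ->]]]. exact (sigma_closed Hd).
  - intros x Vx. destruct (not_le_compact _ _ (Hdis x Vx)) as [d [Hd [Hdx HdP]]].
    exists (compl (sigma d)). split; [exists d; split; auto|].
    unfold compl. rewrite (Hf d Hd). unfold supp. auto.
  - destruct (list_choice cover lU H1) as [ld [M1 M2]].
    assert (Hpc : compact (prodl ld)).
    { apply prodl_compact. intros d Hd. destruct (M1 d Hd) as [U [_ [Hd' _]]]. exact Hd'. }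
    exists (prodl ld). split; [exact Hpc|split].
    + rewrite (prime_prodl _ HP). intros [d [Hd HdP]]. destruct (M1 d Hd) as [_ [_ [_ [H _]]]].
      exact (H HdP).
    + intros x Vx Hsx. destruct (H2 x Vx) as [U [HU Ux]].
      destruct (M2 U HU) as [d [Hd [Cd [_ ->]]]].
      unfold compl in Ux. rewrite (Hf d Cd) in Ux. rewrite (Hf _ Hpc) in Hsx.
      apply Hsx. apply le_trans with d; [apply prodl_le; auto|apply NNPP; auto].
Qed.

Lemma below_P_closed : closed opX below_P.
Proof.
  unfold closed.
  replace (compl below_P) with
    (fun x => exists U, (exists d, compact d /\ ~ le d P /\ U = compl (sigma d)) /\ U x).
  - apply open_bigcup; auto. intros U [d [Hd [_ ->]]]. exact (sigma_closed Hd).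
  - apply pred_ext. intro x. unfold compl, below_P. split.
    + intros [U [[d [Hd [HdP ->]]] Ux]] H. apply Ux. apply Hf; auto. intro H'.
      apply HdP. apply le_trans with (1 := H'); auto.
    + intro H. destruct (not_le_compact _ _ H) as [d [Hd [Hdx HdP]]]. exists (compl (sigma d)).
      split; [exists d; auto|]. unfold compl. rewrite (Hf d Hd). unfold supp. auto.
Qed.

Lemma below_P_nonempty : exists z, below_P z.
Proof.
  apply NNPP. intro Hne.
  destruct (sigma_disjoint_open (fun _ => True)) as [d [Hd [HdP Hsd]]].
  - apply open_setT; auto.
  - exact (proj1 (proj2 (proj1 Hcl))).
  - intros x _ Ax. apply Hne. exists x. exact Ax.
  - apply HdP. apply le_P_of_sigma_sub_phi; auto. intros x Hx. exfalso. exact (Hsd x I Hx).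
Qed.

Lemma compl_open_sub_phi V x1 : opX V -> quasi_compact opX V -> V x1 -> below_P x1 ->
  subset (compl V) (phi P).
Proof.
  intros HV QV Vx1 Ax1 x nVx. apply phi_supp. intro H. apply nVx.
  apply (quasi_compact_open_Vz V HV QV). apply le_trans with P; auto.
  apply le_trans with (proj1_sig (f x1)); auto. apply (quasi_compact_open_Vz V HV QV). exact Vx1.
Qed.

Lemma below_P_irreducible : irreducible_closed opX below_P.
Proof.
  split; [exact below_P_closed|split; [exact below_P_nonempty|]].
  intros C1 C2 HC1 HC2 Hsub. apply NNPP. intro Hn. apply not_or_and in Hn. destruct Hn as [N1 N2].
  assert (exists x1, below_P x1 /\ ~ C1 x1) as [x1 [A1 nC1]].
  { apply NNPP. intro H. apply N1. intros x Ax. apply NNPP. intro. apply H. exists x; auto. }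
  assert (exists x2, below_P x2 /\ ~ C2 x2) as [x2 [A2 nC2]].
  { apply NNPP. intro H. apply N2. intros x Ax. apply NNPP. intro. apply H. exists x; auto. }
  destruct (X_quasi_compact_open_basis _ HC1 _ nC1) as [V1 [HV1 [QV1 [V1x S1]]]].
  destruct (X_quasi_compact_open_basis _ HC2 _ nC2) as [V2 [HV2 [QV2 [V2x S2]]]].
  destruct (sigma_disjoint_open (fun x => V1 x /\ V2 x)) as [d [Hd [HdP Hsd]]].
  - apply open_setI; auto.
  - apply (proj1 (proj2 (proj2 (proj1 Hcl)))); auto.
  - intros x [v1 v2] Ax. destruct (Hsub x Ax) as [c|c]; [exact (S1 x v1 c)|exact (S2 x v2 c)].
  - apply HdP. apply le_P_of_sigma_sub_phi; auto. intros x Hx.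
    destruct (classic (V1 x)) as [v1|nv1]; [destruct (classic (V2 x)) as [v2|nv2]|].
    + exfalso. exact (Hsd x (conj v1 v2) Hx).
    + exact (compl_open_sub_phi V2 x2 HV2 QV2 V2x A2 x nv2).
    + exact (compl_open_sub_phi V1 x1 HV1 QV1 V1x A1 x nv1).
Qed.

(* The generic point of [f^-1 {p | p <= P}] is sent to [P]: otherwise it lies in [phi P],
   hence in a closed member [W] of its decomposition, and then so does all of [below_P]. *)
Lemma f_hits_prime : exists x, proj1_sig (f x) = P.
Proof.
  destruct (X_generic_point _ below_P_irreducible) as [x0 Hx0].
  assert (Ax0 : below_P x0) by (apply (proj2 (Hx0 x0)); intros C _ H; apply H; reflexivity).
  exists x0. apply le_antisym; auto.
  apply NNPP. intro Hn. apply (proj2 (phi_supp P x0)) in Hn.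
  destruct (phi_classifying_dual_open P (prime_semiprime HP)) as [Fm [HF HY]].
  apply HY in Hn. destruct Hn as [W [FW Wx0]]. destruct (HF W FW) as [HoW HqW].
  assert (AW : forall y, below_P y -> W y).
  { intros y Ay. apply (proj1 (Hx0 y) Ay); [exact HoW|]. intros z ->. exact Wx0. }
  destruct (sigma_disjoint_open (compl W) HoW HqW) as [d [Hd [HdP Hsd]]].
  - intros x nW Ax. exact (nW (AW x Ax)).
  - apply HdP. apply le_P_of_sigma_sub_phi; auto. intros x Hx. apply HY. exists W. split; auto.
    apply NNPP. intro nW. exact (Hsd x nW Hx).
Qed.

End Surjective.

Lemma f_surj (p : Spec L) : exists x, f x = p.
Proof.
  destruct p as [P HP]. destruct (f_hits_prime P HP) as [x Hx]. exists x. apply spec_inj. exact Hx.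
Qed.

Definition finv (p : Spec L) : X := proj1_sig (constructive_indefinite_description _ (f_surj p)).

Lemma f_finv p : f (finv p) = p.
Proof. exact (proj2_sig (constructive_indefinite_description _ (f_surj p))). Qed.

Lemma finv_f x : finv (f x) = x.
Proof. apply f_inj. apply f_finv. Qed.

(* [f^-1 V(c)] is the complement of the dual-open [phi (rad c)]; the Zariski compactness of
   [supp c] reduces it to a finite intersection of quasi-compact opens. *)
Lemma Vz_preimage_quasi_compact c : compact c -> quasi_compact opX (fun x => Vz c (f x)).
Proof.
  intro Hc.
  destruct (phi_classifying_dual_open (rad c) (rad_semiprime c)) as [Fm [HF HY]].
  assert (Wrep : forall W, Fm W -> forall x, phi (psi W) x <-> W x).
  { intros W FW. apply phi_psi_classifying, dual_open_single; apply HF; auto. }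
  pose (cover := fun U W => Fm W /\ U = supp (psi W)).
  destruct (supp_zariski_quasi_compact c Hc (fun U => exists W, cover U W)) as [lU [H1 H2]].
  - intros U [W [_ ->]]. exists (psi W). intro; reflexivity.
  - intros p Hp.
    assert (Hx : phi (rad c) (finv p)).
    { apply phi_supp. unfold supp. rewrite f_finv, (rad_prime c (proj2_sig p)). exact Hp. }
    apply HY in Hx. destruct Hx as [W [FW Wx]].
    exists (supp (psi W)). split; [exists W; split; auto|].
    apply Wrep, phi_supp in Wx; auto. rewrite f_finv in Wx. exact Wx.
  - destruct (list_choice cover lU H1) as [lW [M1 M2]].
    assert (E : forall x, Vz c (f x) <-> forall W, In W lW -> compl W x).
    { intro x. split.
      - intros Hcx W HW Wx. destruct (M1 W HW) as [U [_ [FW _]]].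
        assert (H : phi (rad c) x) by (apply HY; exists W; auto).
        apply phi_supp in H. apply H. apply (rad_prime c (proj2_sig (f x))). exact Hcx.
      - intro H. apply NNPP. intro Hn. destruct (H2 (f x) Hn) as [U [HU Ux]].
        destruct (M2 U HU) as [W [HW [FW ->]]]. apply (H W HW).
        apply (Wrep W FW). apply phi_supp. exact Ux. }
    apply quasi_compact_ext with (fun x => forall W, In W lW -> compl W x).
    + intro x. rewrite E. tauto.
    + refine (proj2 (spectral_open_inter_list _ _ HX (fun W => compl W) lW (proj1 Hcl) _)).
      intros W HW. destruct (M1 W HW) as [U [_ [FW _]]]. apply HF; auto.
Qed.

(* Continuity of [f^-1]: assuming that no [f^-1 V(c)] with [c <= f x] compact fits inside the
   open [V], Zorn's lemma yields a minimal closed set outside [V] meeting every such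
   [f^-1 V(c)]; its generic point contradicts the upward closedness of [V]. *)
Section OpenImage.
Variables (V : X -> Prop) (x : X).
Hypotheses (HV : opX V) (Vx : V x).
Hypothesis Hno : forall c, compact c -> Vz c (f x) -> exists y, Vz c (f y) /\ ~ V y.

Definition witnessing (C : X -> Prop) : Prop :=
  closed opX C /\ subset C (compl V) /\
  forall c, compact c -> Vz c (f x) -> exists y, C y /\ Vz c (f y).

Lemma witnessing_complV : witnessing (compl V).
Proof.
  split; [unfold closed; rewrite complK; exact HV|split; [intros y H; exact H|]].
  intros c Hc Hcx. destruct (Hno c Hc Hcx) as [y [Hy nV]]. exists y; auto.
Qed.

(* Meeting each [f^-1 V(c)] survives intersections of chains because [f^-1 V(c)] is
   quasi-compact and a finite part of a chain has a smallest member. *)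
Lemma witnessing_chain_inter (Ach : (X -> Prop) -> Prop) :
  (forall C, Ach C -> witnessing C) ->
  (forall C D, Ach C -> Ach D -> subset D C \/ subset C D) ->
  witnessing (fun y => ~ V y /\ forall C, Ach C -> C y).
Proof.
  intros HA Htot.
  pose (Ch := fun C => C = compl V \/ Ach C).
  assert (ChW : forall C, Ch C -> witnessing C) by (intros C [->|AC]; auto using witnessing_complV).
  pose (cover := fun U C => Ch C /\ U = compl C).
  assert (HFF : forall U, (exists C, cover U C) -> opX U).
  { intros U [C [HC ->]]. exact (proj1 (ChW C HC)). }
  assert (Eout : forall y, ~ (~ V y /\ forall C, Ach C -> C y) -> exists U, (exists C, cover U C) /\ U y).
  { intros y Hn. apply NNPP. intro H. apply Hn. split.
    - intro Vy. apply H. exists (compl (compl V)). split; [exists (compl V); split; [left|]; auto|].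
      rewrite complK. exact Vy.
    - intros C AC. apply NNPP. intro nC. apply H. exists (compl C).
      split; [exists C; split; [right|]; auto|exact nC]. }
  split; [|split].
  - unfold closed.
    replace (compl (fun y => ~ V y /\ forall C, Ach C -> C y))
      with (fun y => exists U, (exists C, cover U C) /\ U y).
    + apply open_bigcup; auto.
    + apply pred_ext. intro y. split; [|apply Eout].
      intros [U [[C [HC ->]] Uy]] [nV HAy]. apply Uy. destruct HC as [->|AC]; [exact nV|exact (HAy C AC)].
  - intros y [nV _]. exact nV.
  - intros c Hc Hcx. apply NNPP. intro Hn.
    destruct (Vz_preimage_quasi_compact c Hc _ HFF) as [lU [HlU Hcov]].
    { intros y Hy. apply Eout. intro Sy. apply Hn. exists y. auto. }
    destruct (list_choice cover lU HlU) as [lC [M1 M2]].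
    destruct (chain_list_ub (fun C D => subset D C) (compl V) Ach lC) as [D [HD HDl]].
    + intros C y; auto.
    + intros C1 C2 C3 H12 H23 y Hy. auto.
    + intros C AC. exact (proj1 (proj2 (HA C AC))).
    + exact Htot.
    + intros C HC. destruct (M1 C HC) as [U [_ [HCh _]]]. exact HCh.
    + destruct (proj2 (proj2 (ChW D HD)) c Hc Hcx) as [y [Dy Hy]].
      destruct (Hcov y Hy) as [U [HU Uy]]. destruct (M2 U HU) as [C [HC [_ ->]]].
      exact (Uy (HDl C HC y Dy)).
Qed.

Lemma minimal_witnessing_irreducible (Cs : X -> Prop) : witnessing Cs ->
  (forall D, witnessing D -> subset D Cs -> D = Cs) -> irreducible_closed opX Cs.
Proof.
  intros [HCc [HCV HCm]] Hmin.
  assert (Hi : forall C', closed opX C' -> ~ subset Cs C' ->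
    exists c, compact c /\ Vz c (f x) /\ forall y, Cs y -> C' y -> ~ Vz c (f y)).
  { intros C' HC' Hn. apply NNPP. intro Hn'. apply Hn.
    assert (WD : witnessing (fun y => Cs y /\ C' y)).
    { split; [|split].
      - unfold closed. replace (compl (fun y => Cs y /\ C' y)) with (fun y => compl Cs y \/ compl C' y).
        + apply open_setU; auto.
        + apply pred_ext. intro y. unfold compl. tauto.
      - intros y [Cy _]. auto.
      - intros c Hc Hcx. apply NNPP. intro Hm. apply Hn'. exists c. split; [exact Hc|split; [exact Hcx|]].
        intros y Cy C'y Hcy. apply Hm. exists y. auto. }
    intros y Cy. rewrite <- (Hmin _ WD (fun y H => proj1 H)) in Cy. exact (proj2 Cy). }
  split; [exact HCc|split].
  - destruct (HCm bot bot_compact (bot_le _)) as [y [Cy _]]. exists y; auto.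
  - intros C1 C2 HC1 HC2 Hsub. apply NNPP. intro Hn. apply not_or_and in Hn. destruct Hn as [N1 N2].
    destruct (Hi C1 HC1 N1) as [c1 [Hc1 [Hc1x K1]]]. destruct (Hi C2 HC2 N2) as [c2 [Hc2 [Hc2x K2]]].
    destruct (HCm (join c1 c2) (join_compact Hc1 Hc2) (join_lub _ _ _ Hc1x Hc2x)) as [y [Cy Hy]].
    destruct (Hsub y Cy) as [C1y|C2y].
    + apply (K1 y Cy C1y). apply le_trans with (2 := Hy). apply join_l.
    + apply (K2 y Cy C2y). apply le_trans with (2 := Hy). apply join_r.
Qed.

(* A minimal witnessing closed set has a generic point [y0] with [f x <= f y0], which then
   lies in [V] although the set avoids [V]. *)
Lemma no_witnessing_closed : False.
Proof.
  destruct (zorn_maximal witnessing (fun C D => subset D C)) as [Cs [WCs Hmin]].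
  - intros C y; auto.
  - intros C1 C2 C3 H12 H23 y Hy. auto.
  - intros C D _ _ H1 H2. apply pred_ext. intro y; split; auto.
  - intros Ach HA Htot. exists (fun y => ~ V y /\ forall C, Ach C -> C y).
    split; [exact (witnessing_chain_inter Ach HA Htot)|]. intros C AC y [_ Hy]. exact (Hy C AC).
  - destruct (X_generic_point _ (minimal_witnessing_irreducible Cs WCs Hmin)) as [y0 Hy0].
    destruct WCs as [HCc [HCV HCm]].
    assert (Cy0 : Cs y0) by (apply (proj2 (Hy0 y0)); intros C _ H; apply H; reflexivity).
    apply (HCV y0 Cy0). apply (open_up_closed V x y0 HV Vx).
    apply le_compacts. intros c Hc Hcx. apply NNPP. intro Hn.
    destruct (HCm c Hc Hcx) as [y [Cy Hcy]].
    assert (Hsy : sigma c y).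
    { apply (proj1 (Hy0 y) Cy); [exact (sigma_closed Hc)|]. intros z ->. apply Hf; auto. }
    apply (Hf c Hc) in Hsy. exact (Hsy Hcy).
Qed.

End OpenImage.

Lemma open_contains_Vz_preimage V x : opX V -> V x ->
  exists c, compact c /\ Vz c (f x) /\ forall y, Vz c (f y) -> V y.
Proof.
  intros HV Vx. apply NNPP. intro Hno. apply (no_witnessing_closed V x HV Vx).
  intros c Hc Hcx. apply NNPP. intro Hn. apply Hno. exists c. split; [exact Hc|split; [exact Hcx|]].
  intros y Hy. apply NNPP. intro nV. apply Hn. exists y; auto.
Qed.

Lemma finv_continuous : continuous (@star_open L) opX finv.
Proof.
  intros U HU. apply star_openP. intros p Up.
  destruct (open_contains_Vz_preimage U (finv p) HU Up) as [c [Hc [Hcx HcU]]].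
  rewrite f_finv in Hcx. exists c. split; [exact Hc|split; [exact Hcx|]].
  intros q Hq. apply HcU. rewrite f_finv. exact Hq.
Qed.

End FromClassifying.

Lemma classifying_homeomorphism : is_topology opX -> continuous opX (@star_open L) f ->
  classifying L opX sigma -> homeomorphism opX (@star_open L) f.
Proof.
  intros HX Hfc Hcl. exists (finv HX Hcl).
  exact (conj (finv_f HX Hcl) (conj (f_finv HX Hcl) (conj Hfc (finv_continuous HX Hcl)))).
Qed.
End SupportData.
End IdealLatticeTheory.

Theorem mainTheorem11 (L : IdealLattice) (X : Type)
  (opX : (X -> Prop) -> Prop) (HX : is_topology opX)
  (sigma : L -> X -> Prop) (Hs : support_datum L opX sigma)
  (f : X -> Spec L)
  (Hfc : continuous opX (@star_open L) f)
  (Hf : forall a : L, compact a -> forall x, sigma a x <-> supp a (f x)) :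
  classifying L opX sigma <-> homeomorphism opX (@star_open L) f.
Proof.
  split.
  - exact (classifying_homeomorphism L X opX sigma f Hs Hf HX Hfc).
  - exact (homeomorphism_classifying L X opX sigma f Hs Hf).
Qed.
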